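(* There is a universal constant $c>0$ such that the following holds. Let $\gamma \in (0, 1/6]$, let $n \geq 2$ be an integer, and let $\eta \geq \eta_1 := \max\{n, \frac{32}{\gamma^2}\log(3/\gamma)\}$. Then there exist a dimension $d$ and a dataset $x_1,\dots,x_n\in\mathbb{R}^d$ with $\|x_i\| \le 1$ for all $i$, linearly separable with maximum margin exactly $\gamma$, such that gradient descent with step size $\eta$ on this dataset has transition time $\tau := \min\{t \geq 0 : F(w_t) \leq 1/(8\eta)\}$ satisfying $\tau \geq c\left(\frac{n}{\gamma} + \frac{1}{\gamma^2}\right)$.
   Context: All labels are $+1$. Linear separability: some $w$ has $\langle w,x_i\rangle>0$ for all $i$. Maximum margin: $\max_{\|w\|=1}\min_i\langle w,x_i\rangle$. Loss $F(w) = \frac{1}{n}\sum_{i=1}^n \log(1+\exp(-\langle w, x_i\rangle))$. Gradient descent with constant step size $\eta$: $w_0 = 0$, $w_{t+1} = w_t - \eta\nabla F(w_t)$. *)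

From Stdlib Require Import Reals.
From HB Require Import structures.
From mathcomp Require Import all_boot all_order all_algebra.
From mathcomp Require Import Rstruct.
Set Implicit Arguments. Unset Strict Implicit. Unset Printing Implicit Defensive.
Import Order.TTheory GRing.Theory Num.Theory.
Local Open Scope ring_scope.

Definition dot (d : nat) (u v : 'rV[R]_d) : R := \sum_(k < d) u 0 k * v 0 k.
Definition vnorm (d : nat) (u : 'rV[R]_d) : R := Num.sqrt (dot u u).

(* Logistic loss F(w) = 1/n sum_i log(1 + exp(-<w,x_i>)) (all labels +1). *)
Definition loss (n d : nat) (x : 'I_n -> 'rV[R]_d) (w : 'rV[R]_d) : R :=
  n%:R^-1 * \sum_(i < n) ln (1 + exp (- dot w (x i))).

Definition grad (n d : nat) (x : 'I_n -> 'rV[R]_d) (w : 'rV[R]_d) : 'rV[R]_d :=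
  n%:R^-1 *: \sum_(i < n) (- (1 + exp (dot w (x i)))^-1) *: x i.

Fixpoint gd (n d : nat) (x : 'I_n -> 'rV[R]_d) (eta : R) (t : nat) : 'rV[R]_d :=
  match t with
  | O => 0
  | S t' => gd x eta t' - eta *: grad x (gd x eta t')
  end.

Definition lin_separable (n d : nat) (x : 'I_n -> 'rV[R]_d) : Prop :=
  exists w : 'rV[R]_d, forall i, 0 < dot w (x i).

(* max_{||w||=1} min_i <w,x_i> = g : the value g is attained by some unit w,
   and no unit w does better. *)
Definition max_margin_is (n d : nat) (x : 'I_n -> 'rV[R]_d) (g : R) : Prop :=
  (exists w : 'rV[R]_d, vnorm w = 1 /\ forall i, g <= dot w (x i)) /\
  (forall w : 'rV[R]_d, vnorm w = 1 -> exists i, dot w (x i) <= g).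

From Stdlib Require Import Reals.
From HB Require Import structures.
From mathcomp Require Import all_boot all_order all_algebra.
From mathcomp Require Import Rstruct.
From mathcomp.algebra_tactics Require Import ring lra.
Import Order.TTheory GRing.Theory Num.Theory.
Local Open Scope ring_scope.
Set Implicit Arguments. Unset Strict Implicit. Unset Printing Implicit Defensive.

(* The dataset is planar: one point y0 = (g, h0) and n - 1 copies of y1 = (g, h1)
   with h0 h1 <= 0, so that (1, 0) attains the margin g and nothing does better.
   By a one-term lower bound on the loss, F(w_t) <= 1/(8 eta) forces
   exp <w_t, y0> >= 8 eta / n - 1, and we bound how fast <w_t, y0> can grow.
   If n g >= 1/100, take y1 = (g, 4/5): the copies of y1 pull <w_1, y0> down to
   the order of - eta g, and each step raises it by at most 2 (eta / n) g^2, so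
   about n / g steps are needed.  If n g < 1/100, take y0 = (g, 3 g^2) and
   y1 = (g, -b) with b tuned so that <w_1, y0> = ln (max 1 K), K = (eta / n) |y0|^2.
   Then exp <w_t, y0> grows by at most 27 K per step while the cross term coming
   from y1 stays negligible, and a bootstrap keeps both facts alive for
   1 / (7 g^2) steps, during which exp <w_t, y0> stays below 6 eta / n. *)

Section LogisticGradientDescent.

#[local] Bind Scope ring_scope with R.
#[local] Arguments exp _%_ring_scope.
#[local] Arguments ln _%_ring_scope.

Implicit Types x y z : R.

Lemma exp_gt0 x : 0 < exp x.
Proof. exact/RltP/exp_pos. Qed.

Lemma expD x y : exp (x + y) = exp x * exp y.
Proof. by rewrite expRD. Qed.

Lemma exp0 : exp 0 = 1.
Proof. exact: expR0. Qed.

Lemma expN x : exp (- x) = (exp x)^-1.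
Proof. exact: exp_Ropp. Qed.

Lemma exp_ge1D x : 1 + x <= exp x.
Proof. exact/RleP/exp_ineq1_le. Qed.

Lemma exp1_le3 : exp 1 <= 3.
Proof. exact/RleP/exp_le_3. Qed.

Lemma ltr_exp x y : (exp x < exp y) = (x < y).
Proof.
by apply/idP/idP => /RltP h; apply/RltP; [exact: exp_lt_inv | exact: exp_increasing].
Qed.

Lemma ler_exp x y : (exp x <= exp y) = (x <= y).
Proof. by rewrite !leNgt ltr_exp. Qed.

Lemma expK x : ln (exp x) = x.
Proof. exact: ln_exp. Qed.

Lemma lnK x : 0 < x -> exp (ln x) = x.
Proof. by move=> /RltP; apply: exp_ln. Qed.

Lemma ln1 : ln 1 = 0.
Proof. exact: ln_1. Qed.

Lemma ler_ln x y : 0 < x -> 0 < y -> (ln x <= ln y) = (x <= y).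
Proof. by move=> x0 y0; rewrite -ler_exp !lnK. Qed.

Lemma ln_ge2 y : 18 <= y -> 2 <= ln y.
Proof.
move=> y_ge; rewrite -[2]expK ler_ln ?exp_gt0 //; last lra.
have : exp 1 ^+ 2 <= 3 ^+ 2 by rewrite lerXn2r ?nnegrE ?exp1_le3 ?(ltW (exp_gt0 _)).
by rewrite expRX !expr2; lra.
Qed.

Lemma exp_le1D27 y : 0 <= y -> y <= 3 -> exp y <= 1 + 27 * y.
Proof.
move=> y_ge0 y_le3.
have exp3 : exp y <= 27.
  have : exp y <= exp 1 ^+ 3 by rewrite expRX ler_exp.
  have : exp 1 ^+ 3 <= 3 ^+ 3 by rewrite lerXn2r ?nnegrE ?exp1_le3 ?(ltW (exp_gt0 _)).
  have -> : 3 ^+ 3 = 27 :> R by rewrite -natrX.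
  lra.
(* [1 - y <= exp (- y)] gives [exp y <= 1 + y * exp y]. *)
have : exp y * (1 - y) <= exp y * exp (- y).
  by apply: ler_wpM2l; [exact: ltW (exp_gt0 _) | have := exp_ge1D (- y); lra].
rewrite -expD subrr exp0 => h.
have : y * exp y <= y * 27 by rewrite ler_wpM2l.
lra.
Qed.

Lemma ln_ge1Binv y : 0 < y -> 1 - y^-1 <= ln y.
Proof. by move=> y0; have := exp_ge1D (- ln y); rewrite expN lnK //; lra. Qed.

Lemma ln_le_half y : 0 < y -> ln y <= y / 2.
Proof.
move=> y0; rewrite -[leRHS]expK ler_ln ?exp_gt0 //.
have e : exp (y / 2) = exp (y / 4) ^+ 2 by rewrite expRX mulr2n; congr exp; field.
rewrite e; have := exp_ge1D (y / 4) => h.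
have : (1 + y / 4) ^+ 2 <= exp (y / 4) ^+ 2 by rewrite lerXn2r ?nnegrE; lra.
have : y <= (1 + y / 4) ^+ 2 by have := sqr_ge0 (1 - y / 4); rewrite sqrrB sqrrD expr1n; lra.
lra.
Qed.

Lemma pow_le_exp (k : nat) x : 0 <= x -> (x / k.+1%:R) ^+ k.+1 <= exp x.
Proof.
move=> x0; have -> : exp x = exp (x / k.+1%:R) ^+ k.+1.
  by rewrite expRX; congr exp; rewrite -[_ *+ _]mulr_natr divfK ?lt0r_neq0.
rewrite lerXn2r ?nnegrE ?(ltW (exp_gt0 _)) ?divr_ge0 //.
by set z := x / _; have := exp_ge1D z; lra.
Qed.

(* [sigma z = - l'(z)] for the logistic loss [l z = ln (1 + exp (- z))]. *)
Definition sigma z : R := (1 + exp z)^-1.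

Lemma exp1D_gt0 z : 0 < 1 + exp z.
Proof. by have := exp_gt0 z; lra. Qed.

Lemma sigma_gt0 z : 0 < sigma z.
Proof. by rewrite invr_gt0 exp1D_gt0. Qed.

Lemma sigma_le1 z : sigma z <= 1.
Proof. by rewrite invf_le1 ?exp1D_gt0 //; have := exp_gt0 z; lra. Qed.

Lemma sigma0 : sigma 0 = 2^-1.
Proof. by rewrite /sigma exp0. Qed.

Lemma sigmaK z : sigma z * (1 + exp z) = 1.
Proof. exact/mulVf/lt0r_neq0/exp1D_gt0. Qed.

Lemma exp_sigma_le1 z : exp z * sigma z <= 1.
Proof. by have := sigmaK z; have := sigma_gt0 z; nra. Qed.

Lemma sigma_le_expN z : sigma z <= exp (- z).
Proof.
by rewrite expN -(ler_pM2l (exp_gt0 z)) mulfV ?exp_sigma_le1 ?lt0r_neq0 ?exp_gt0.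
Qed.

Lemma sigma_le_ln z : sigma z <= ln (1 + exp (- z)).
Proof.
suff -> : sigma z = 1 - (1 + exp (- z))^-1 by exact: ln_ge1Binv (exp1D_gt0 _).
have ez := exp_gt0 z; have ez' : 0 < (exp z)^-1 by rewrite invr_gt0.
rewrite /sigma expN; field.
by rewrite !lt0r_neq0 //; lra.
Qed.

Section Dot.
Variable d : nat.
Implicit Types u v w : 'rV[R]_d.

Lemma dot0l w : dot 0 w = 0.
Proof. by rewrite /dot big1 // => k _; rewrite mxE mul0r. Qed.

Lemma dotBl u v w : dot (u - v) w = dot u w - dot v w.
Proof. by rewrite /dot -sumrB; apply: eq_bigr => k _; rewrite !mxE mulrBl. Qed.

Lemma dotZl a u w : dot (a *: u) w = a * dot u w.
Proof. by rewrite /dot mulr_sumr; apply: eq_bigr => k _; rewrite mxE mulrA. Qed.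

Lemma dot_suml (I : finType) (u : I -> 'rV[R]_d) w :
  dot (\sum_i u i) w = \sum_i dot (u i) w.
Proof.
by rewrite /dot exchange_big; apply: eq_bigr => k _; rewrite summxE mulr_suml.
Qed.

End Dot.

Section GradientDescent.
Variables (n d : nat) (x : 'I_n -> 'rV[R]_d) (eta : R).

Lemma dot_gdS t v :
  dot (gd x eta t.+1) v = dot (gd x eta t) v +
    eta / n%:R * \sum_i sigma (dot (gd x eta t) (x i)) * dot (x i) v.
Proof.
rewrite /= dotBl dotZl /grad dotZl dot_suml mulrA -mulrN -sumrN; congr (_ + _ * _).
by apply: eq_bigr => i _; rewrite dotZl mulNr opprK.
Qed.

(* [loss] is written with Stdlib's [Rplus] and [Ropp]; restate it with the ring operations. *)
Lemma lossE w : loss x w = n%:R^-1 * \sum_i ln (1 + exp (- dot w (x i))).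
Proof. by []. Qed.

Lemma loss_ge_sigma w i : n%:R^-1 * sigma (dot w (x i)) <= loss x w.
Proof.
have ln_ge0 j : 0 <= ln (1 + exp (- dot w (x j))).
  exact: le_trans (ltW (sigma_gt0 _)) (sigma_le_ln _).
rewrite lossE ler_wpM2l ?invr_ge0 ?ler0n // (bigD1 i) //=.
by rewrite -[leLHS]addr0 lerD ?sigma_le_ln ?sumr_ge0.
Qed.

Lemma exp_margin_ge_small_loss w i : 0 < eta -> loss x w <= (8 * eta)^-1 ->
  8 * (eta / n%:R) <= 1 + exp (dot w (x i)).
Proof.
move=> eta0 small; have n0 : 0 < n%:R :> R by rewrite ltr0n (leq_ltn_trans _ (ltn_ord i)).
have := le_trans (loss_ge_sigma w i) small.
rewrite -(ler_pM2l (exp1D_gt0 (dot w (x i)))) mulrCA [_ * sigma _]mulrC sigmaK mulr1.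
by rewrite ler_pdivlMr ?mulr_gt0 // mulrC -mulrA.
Qed.

End GradientDescent.

Definition cluster2 (m d : nat) (y0 y1 : 'rV[R]_d) : 'I_m.+1 -> 'rV[R]_d :=
  fun i => if i == ord0 then y0 else y1.
Arguments cluster2 m {d}.

Section Cluster2.
Variables (m d : nat) (y0 y1 : 'rV[R]_d) (eta : R).
Let x := cluster2 m y0 y1.

Lemma sum_cluster2 (F : 'rV[R]_d -> R) : \sum_i F (x i) = F y0 + m%:R * F y1.
Proof.
rewrite big_ord_recl /x /cluster2 eqxx; congr (_ + _).
under eq_bigr do rewrite eq_sym (negbTE (neq_lift _ _)).
by rewrite sumr_const card_ord mulr_natl.
Qed.

Lemma dot_gd_cluster2S t v :
  dot (gd x eta t.+1) v = dot (gd x eta t) v + eta / m.+1%:R *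
    (sigma (dot (gd x eta t) y0) * dot y0 v + m%:R * (sigma (dot (gd x eta t) y1) * dot y1 v)).
Proof. by rewrite dot_gdS (sum_cluster2 (fun u => sigma (dot (gd x eta t) u) * dot u v)). Qed.

End Cluster2.

Definition pt2 (a b : R) : 'rV[R]_2 := \row_(k < 2) if k == 0 :> nat then a else b.

Lemma dot_pt2 (w : 'rV[R]_2) a b : dot w (pt2 a b) = w 0 0 * a + w 0 1 * b.
Proof.
rewrite /dot !big_ord_recl big_ord0 !mxE addr0.
by congr (w 0 _ * _ + w 0 _ * _); apply: val_inj.
Qed.

Lemma dot_pt2_pt2 a b a' b' : dot (pt2 a b) (pt2 a' b') = a * a' + b * b'.
Proof. by rewrite dot_pt2 !mxE. Qed.

Lemma vnorm_pt2_le1 a b : a ^+ 2 + b ^+ 2 <= 1 -> vnorm (pt2 a b) <= 1.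
Proof. by move=> h; rewrite /vnorm dot_pt2_pt2 -!expr2 -sqrtr1 ler_sqrt. Qed.

Lemma pt2E (w : 'rV[R]_2) : w = pt2 (w 0 0) (w 0 1).
Proof.
by apply/rowP => -[[|[|//]] lt_k]; rewrite mxE //=; congr (w 0 _); apply: val_inj.
Qed.

Lemma margin_cluster2 (m : nat) (g h0 h1 : R) : 0 < g -> h0 * h1 <= 0 ->
  lin_separable (cluster2 m.+1 (pt2 g h0) (pt2 g h1)) /\
  max_margin_is (cluster2 m.+1 (pt2 g h0) (pt2 g h1)) g.
Proof.
move=> g0 h01; set x := cluster2 _ _ _.
have e1x i : dot (pt2 1 0) (x i) = g.
  by rewrite /x /cluster2; case: (i == ord0); rewrite dot_pt2_pt2; ring.
split; first by exists (pt2 1 0) => i; rewrite e1x.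
split.
  exists (pt2 1 0); split; last by move=> i; rewrite e1x.
  by rewrite /vnorm dot_pt2_pt2 mulr1 mulr0 addr0 sqrtr1.
move=> w w1; have {}w1 : w 0 0 ^+ 2 + w 0 1 ^+ 2 = 1.
  have ww0 : 0 <= dot w w by rewrite {2}[w]pt2E dot_pt2 -!expr2 addr_ge0 ?sqr_ge0.
  have : dot w w = 1 by rewrite -(sqr_sqrtr ww0) -/(vnorm w) w1 expr1n.
  by rewrite {2}[w]pt2E dot_pt2 -!expr2.
(* As [h0 * h1 <= 0], [w 0 1 * h <= 0] for [h = h0] or [h = h1]. *)
have dot_le h : w 0 1 * h <= 0 -> dot w (pt2 g h) <= g.
  by rewrite dot_pt2 => wh; nra.
have [wh0|wh0] := lerP (w 0 1 * h0) 0.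
  by exists ord0; rewrite /x /cluster2 eqxx dot_le.
exists (lift ord0 ord0); rewrite /x /cluster2 eq_sym (negbTE (neq_lift _ _)) dot_le //.
have : (w 0 1 * h0) * (w 0 1 * h1) <= 0 by rewrite mulrACA mulr_ge0_le0 // -expr2 sqr_ge0.
nra.
Qed.

Lemma le_drift (u : nat -> R) D : (forall k, u k.+1 <= u k + D) ->
  forall j k, u (j + k)%N <= u j + k%:R * D.
Proof.
move=> uS j; elim=> [|k IHk]; first by rewrite addn0 mul0r addr0.
by rewrite addnS -natr1 mulrDl mul1r addrA (le_trans (uS _)) ?lerD2r.
Qed.

Definition sigma_sum (u : nat -> R) k : R := \sum_(j < k) sigma (u j).

Lemma sigma_sum_ge0 u k : 0 <= sigma_sum u k.
Proof. by apply: sumr_ge0 => j _; apply: ltW (sigma_gt0 _). Qed.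

Lemma sigma_sumS u k : sigma_sum u k.+1 = sigma_sum u k + sigma (u k).
Proof. by rewrite /sigma_sum big_ord_recr. Qed.

Section CoupledRecurrence.
Variables (K L A B Q H T : R) (u v : nat -> R).
Hypotheses (K_ge0 : 0 <= K) (L_ge0 : 0 <= L) (K_le_expL : K <= exp L).
Hypotheses (A_ge0 : 0 <= A) (B_le : B <= 2 * K).
Hypotheses (u0 : u 0%N = L) (v0 : v 0%N = Q).
Hypothesis uS : forall k, u k.+1 = u k + K * sigma (u k) - A * sigma (v k).
Hypothesis vS : forall k, v k - B * sigma (u k) <= v k.+1.
Hypothesis expL_le : exp L + 27 * K * T <= H.
Hypothesis T_cross : T * (A * (9 * H ^+ 2 * exp (- Q))) <= 1.

Let u_split k : u k = L + K * sigma_sum u k - A * sigma_sum v k.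
Proof.
elim: k => [|k IHk]; first by rewrite u0 /sigma_sum !big_ord0 !mulr0 addr0 subr0.
by rewrite uS {1}IHk !sigma_sumS; ring.
Qed.

Let v_ge k : Q - B * sigma_sum u k <= v k.
Proof.
elim: k => [|k IHk]; first by rewrite v0 /sigma_sum big_ord0 mulr0 subr0.
by apply: le_trans (vS k); rewrite sigma_sumS mulrDr opprD addrA lerD2r.
Qed.

Let exp_uS_le k : A * sigma_sum v k <= 1 -> exp (u k.+1) <= exp (u k) + 27 * K.
Proof.
move=> cross_le1; have uk : L - 1 <= u k.
  by rewrite u_split; have := mulr_ge0 K_ge0 (sigma_sum_ge0 u k); lra.
set y := K * sigma (u k).
have y_ge0 : 0 <= y := mulr_ge0 K_ge0 (ltW (sigma_gt0 _)).
have y_le3 : y <= 3.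
  have : y <= exp L * exp (- u k).
    by apply: ler_pM => //; [exact: ltW (sigma_gt0 _) | exact: sigma_le_expN].
  rewrite -expD => /le_trans; apply; apply: le_trans exp1_le3.
  by rewrite ler_exp; lra.
have : exp (u k.+1) <= exp (u k) * exp y.
  rewrite -expD ler_exp uS -/y.
  by have := mulr_ge0 A_ge0 (ltW (sigma_gt0 (v k))); lra.
move/le_trans; apply.
apply: le_trans (_ : exp (u k) * (1 + 27 * y) <= _).
  by apply: ler_wpM2l; [exact: ltW (exp_gt0 _) | exact: exp_le1D27].
have := ler_wpM2l K_ge0 (exp_sigma_le1 (u k)).
by rewrite mulrDr mulr1 lerD2l /y; lra.
Qed.

Let cross_term_le k : A * sigma_sum v k <= 1 -> exp (u k) <= H ->
  A * sigma (v k) <= A * (9 * H ^+ 2 * exp (- Q)).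
Proof.
move=> cross_le1 uH; rewrite ler_wpM2l //; apply: le_trans (sigma_le_expN _) _.
(* As [B <= 2 K], the lag of [v] is controlled by the growth of [u]. *)
have vk : Q - 2 * u k - 2 <= v k.
  apply: le_trans (v_ge k); rewrite [u k]u_split.
  have : B * sigma_sum u k <= 2 * K * sigma_sum u k by rewrite ler_wpM2r ?sigma_sum_ge0.
  by have := L_ge0; lra.
have : exp (- v k) <= exp 1 ^+ 2 * exp (u k) ^+ 2 * exp (- Q).
  by rewrite !expRX -!expD ler_exp !mulr2n; lra.
move/le_trans; apply; rewrite ler_pM2r ?exp_gt0 //.
have e0 := ltW (exp_gt0 1); have u0' := ltW (exp_gt0 (u k)).
apply: ler_pM; rewrite ?exprn_ge0 //.
  by rewrite (_ : 9 = 3 ^+ 2) ?lerXn2r ?nnegrE ?exp1_le3 // -natrX.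
by rewrite lerXn2r ?nnegrE //; apply: le_trans uH.
Qed.

Lemma coupled_rec_exp_le k : k%:R <= T -> exp (u k) <= exp L + 27 * K * k%:R.
Proof.
pose delta := A * (9 * H ^+ 2 * exp (- Q)).
have delta_ge0 : 0 <= delta.
  exact: mulr_ge0 A_ge0 (mulr_ge0 (mulr_ge0 (ler0n _ 9) (sqr_ge0 H)) (ltW (exp_gt0 _))).
suff : k%:R <= T ->
    A * sigma_sum v k <= k%:R * delta /\ exp (u k) <= exp L + 27 * K * k%:R.
  by move=> h /h[].
elim: k => [|k IHk] kT.
  by rewrite /sigma_sum big_ord0 u0 !(mulr0, mul0r) addr0.
have kT' : k%:R <= T by apply: le_trans kT; rewrite ler_nat.
have [cross_k uk] := IHk kT'.
have cross_le1 : A * sigma_sum v k <= 1.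
  by apply: le_trans cross_k _; apply: le_trans T_cross; rewrite ler_wpM2r.
have uH : exp (u k) <= H.
  by apply: le_trans uk _; apply: le_trans expL_le; rewrite lerD2l ler_wpM2l ?mulr_ge0.
rewrite sigma_sumS mulrDr -natr1; split.
  by rewrite mulrDl mul1r lerD ?cross_term_le.
by apply: le_trans (exp_uS_le cross_le1) _; lra.
Qed.

End CoupledRecurrence.

Lemma cube_le_exp y : 200 * 192 <= y -> 58 * y ^+ 3 <= exp (y / 24).
Proof.
move=> y_ge; apply: le_trans (pow_le_exp 7 _); last lra.
have -> : y / 24 / 8%:R = y / 192 by field.
set z := y / 192; have z_ge : 200 <= z by rewrite /z ler_pdivlMr //; lra.
have -> : y = 192 * z by rewrite /z; field.
have z0 : 0 <= z by lra.
have -> : z ^+ 8 = z ^+ 5 * z ^+ 3 by rewrite -exprD.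
rewrite exprMn mulrA ler_wpM2r ?exprn_ge0 //.
apply: le_trans (_ : 200 ^+ 2 * 200 ^+ 3 <= _); last by rewrite -exprD lerXn2r ?nnegrE //; lra.
apply: ler_pM; rewrite ?exprn_ge0 //; last by rewrite lerXn2r ?nnegrE //; lra.
by rewrite expr2; lra.
Qed.

Definition hard_instance (n : nat) (g eta c : R) : Prop :=
  exists (d : nat) (x : 'I_n -> 'rV[R]_d),
    (forall i, vnorm (x i) <= 1) /\
    lin_separable x /\
    max_margin_is x g /\
    (forall t : nat, loss x (gd x eta t) <= (8 * eta)^-1 ->
       c * (n%:R / g + (g ^+ 2)^-1) <= t%:R).

Lemma cluster2_hard_instance (m : nat) (g h0 h1 eta c : R) : 0 < g -> h0 * h1 <= 0 ->
  g ^+ 2 + h0 ^+ 2 <= 1 -> g ^+ 2 + h1 ^+ 2 <= 1 ->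
  (forall t : nat, loss (cluster2 m.+1 (pt2 g h0) (pt2 g h1))
       (gd (cluster2 m.+1 (pt2 g h0) (pt2 g h1)) eta t) <= (8 * eta)^-1 ->
     c * (m.+2%:R / g + (g ^+ 2)^-1) <= t%:R) ->
  hard_instance m.+2 g eta c.
Proof.
move=> g0 h01 norm0 norm1 slow; have [sep mar] := margin_cluster2 m g0 h01.
exists 2, (cluster2 m.+1 (pt2 g h0) (pt2 g h1)); do !split => //.
by move=> i; rewrite /cluster2; case: ifP => _; apply: vnorm_pt2_le1.
Qed.

Lemma tau_bound_le_wide (n g k : R) : 0 < g -> 1 <= 100 * n * g -> 3 * n <= 80 * (k * g) ->
  3000^-1 * (n / g + (g ^+ 2)^-1) <= k.
Proof.
move=> g0 wide kg; have g0' := lt0r_neq0 g0.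
have -> : n / g + (g ^+ 2)^-1 = (n + g^-1) / g by field.
rewrite mulrA ler_pdivrMr //.
have : g^-1 <= 100 * n by rewrite -[leLHS]mul1r ler_pdivrMr.
have : 0 < g^-1 by rewrite invr_gt0.
lra.
Qed.

Lemma tau_bound_le_narrow (n g t : R) : 0 < g -> 100 * n * g < 1 -> (7 * g ^+ 2)^-1 <= t ->
  3000^-1 * (n / g + (g ^+ 2)^-1) <= t.
Proof.
move=> g0 narrow gt; have g0' := lt0r_neq0 g0; apply: le_trans gt.
have -> : n / g + (g ^+ 2)^-1 = (n * g + 1) / g ^+ 2 by field.
rewrite [(7 * _)^-1]invfM mulrA ler_pM2r ?invr_gt0 ?exprn_gt0 //.
lra.
Qed.

Lemma hard_instance_wide (m : nat) (g eta : R) : 0 < g -> g <= 6^-1 -> m.+2%:R <= eta ->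
  1 <= 100 * m.+2%:R * g -> hard_instance m.+2 g eta 3000^-1.
Proof.
move=> g0 g_le n_le_eta wide.
have h01 : - g * (4 / 5) <= 0 by nra.
have norm0 : g ^+ 2 + (- g) ^+ 2 <= 1 by nra.
have norm1 : g ^+ 2 + (4 / 5) ^+ 2 <= 1 by nra.
apply: (cluster2_hard_instance g0 h01 norm0 norm1).
move=> t; set x := cluster2 _ _ _ => small; set N1 : R := m.+1%:R; set E := eta / m.+2%:R.
have N1_ge1 : 1 <= N1 by rewrite ler1n.
have E_ge1 : 1 <= E by rewrite ler_pdivlMr ?mul1r.
have E0 : 0 < E := lt_le_trans ltr01 E_ge1.
pose p k := dot (gd x eta k) (pt2 g (- g)).
have pS k : p k.+1 <= p k + E * (2 * g ^+ 2).
  rewrite /p dot_gd_cluster2S -/x !dot_pt2_pt2 -/E -/N1 lerD2l ler_pM2l; last lra.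
  set z0 := dot _ (pt2 g (- g)).
  have N1_ge0 : 0 <= N1 by rewrite ler0n.
  rewrite -[leRHS]addr0 lerD // ?mulr_ge0_le0 ?(ltW (sigma_gt0 _)) //; last by nra.
  by have := sigma_le1 z0; have := sigma_gt0 z0; rewrite expr2; nra.
have p1 : p 1%N = E * g / 2 * (2 * g + N1 * (g - 4 / 5)).
  by rewrite /p dot_gd_cluster2S /= !dot0l sigma0 !dot_pt2_pt2 -/E -/N1; field.
have pt_gt0 : 0 < p t.
  have := exp_margin_ge_small_loss ord0 (lt_le_trans (ltr0Sn _ _) n_le_eta) small.
  by rewrite -/E /x /cluster2 eqxx -/(p t) => h; rewrite -ltr_exp exp0; lra.
case: t small pt_gt0 => [|k] _ pk_gt0; first by rewrite /p dot0l ltxx in pk_gt0.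
have := le_drift pS 1 k; rewrite add1n p1 => pk_le.
have bracket_gt0 : 0 < 2 * g + N1 * (g - 4 / 5) + 4 * (k%:R * g).
  have Eg : 0 < E * g / 2 := divr_gt0 (mulr_gt0 E0 g0) (ltr0Sn _ 1).
  rewrite -(pmulr_rgt0 _ Eg); apply: lt_le_trans pk_gt0 (le_trans pk_le _).
  by rewrite expr2; lra.
apply: le_trans (_ : k%:R <= _); last by rewrite ler_nat.
apply: tau_bound_le_wide => //.
have -> : m.+2%:R = N1 + 1 :> R by rewrite natr1.
have : N1 * g <= N1 / 6 by rewrite ler_wpM2l ?(le_trans ler01 N1_ge1) // mulrC.
lra.
Qed.

Section Narrow.
Variables (m : nat) (g eta : R).
Hypotheses (g_gt0 : 0 < g) (g_le : g <= 6^-1) (n_le_eta : m.+2%:R <= eta).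
Hypotheses (eta_ge : 64 / g ^+ 2 <= eta) (narrow : 100 * m.+2%:R * g < 1).

Let N1 : R := m.+1%:R.
Let E : R := eta / m.+2%:R.
Let a : R := 3 * g ^+ 2.
Let s : R := g ^+ 2 + a ^+ 2.
Let K : R := E * s.
Let L : R := ln (Num.max 1 K).
(* [c] is chosen so that the first step lands exactly on [<w_1, y0> = L], see [p1],
   and [b] so that [<y0, y1> = - c], see [ab]. *)
Let c : R := (s - 2 * L / E) / N1.
Let b : R := (g ^+ 2 + c) / a.
Let T : R := (7 * g ^+ 2)^-1.

Let eta_gt0 : 0 < eta. Proof. exact: lt_le_trans (ltr0Sn _ _) n_le_eta. Qed.
Let N1_ge1 : 1 <= N1. Proof. by rewrite ler1n. Qed.
Let g2_gt0 : 0 < g ^+ 2. Proof. by rewrite exprn_gt0. Qed.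
Let g2_le : g ^+ 2 <= 36^-1. Proof. by have := g_gt0; have := g_le; rewrite expr2; nra. Qed.

Let E_g : 64 * 100 <= E * g.
Proof.
have n0 : 0 < m.+2%:R :> R by [].
have eta_g : 64 <= eta * g ^+ 2 by rewrite -ler_pdivrMr.
have e : E * g * (100 * m.+2%:R * g) = 100 * (eta * g ^+ 2).
  by rewrite /E expr2; field; rewrite -natrD pnatr_eq0.
have Eg0 : 0 < E * g by rewrite mulr_gt0 ?divr_gt0 //; apply: lt_le_trans n_le_eta.
have : E * g * (100 * m.+2%:R * g) < E * g * 1 by rewrite ltr_pM2l.
lra.
Qed.

Let E_ge : 200 * 192 <= E.
Proof. by have := E_g; have := g_le; have := g_gt0; nra. Qed.

Let s_le : s <= 5 / 4 * g ^+ 2.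
Proof.
rewrite /s /a (_ : (3 * g ^+ 2) ^+ 2 = 9 * g ^+ 2 * g ^+ 2); last by ring.
by have := g2_le; have := g2_gt0; nra.
Qed.

Let E_gt0 : 0 < E. Proof. by have := E_ge; lra. Qed.
Let s_gt0 : 0 < s. Proof. by have := g2_gt0; have := sqr_ge0 a; rewrite /s; lra. Qed.
Let K_ge0 : 0 <= K. Proof. exact: mulr_ge0 (ltW E_gt0) (ltW s_gt0). Qed.

Let L_ge0 : 0 <= L.
Proof. by rewrite /L -(expK 0) ler_ln ?exp0 ?le_max ?lexx // lt_max ltr01. Qed.

Let K_le_expL : K <= exp L.
Proof. by rewrite /L lnK ?le_max ?lexx ?orbT // lt_max ltr01. Qed.

Let L_le : 2 * L <= K.
Proof.
rewrite /L; case: (lerP K 1) => [K1|K1].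
  by rewrite ln1 mulr0.
by have := ln_le_half (lt_trans ltr01 K1); lra.
Qed.

Let N1c : N1 * c = s - 2 * L / E.
Proof. by rewrite /c mulrC divfK // lt0r_neq0 // (lt_le_trans ltr01 N1_ge1). Qed.

Let c_ge0 : 0 <= c.
Proof.
rewrite /c divr_ge0 ?(le_trans ler01 N1_ge1) // subr_ge0 ler_pdivrMr //.
by rewrite [s * E]mulrC; exact: L_le.
Qed.

Let N1c_le : N1 * c <= s.
Proof.
have := divr_ge0 (mulr_ge0 (ler0n _ 2) L_ge0) (ltW E_gt0).
by rewrite N1c; lra.
Qed.

Let c_le : c <= s.
Proof. by apply: le_trans N1c_le; rewrite ler_peMl. Qed.

Let ab : a * b = g ^+ 2 + c.
Proof. by rewrite /b mulrC divfK // /a lt0r_neq0 // mulr_gt0. Qed.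

Let b_ge : 3^-1 <= b.
Proof.
have a0 : 0 < a by rewrite /a mulr_gt0.
by rewrite -(ler_pM2l a0) ab /a; have := c_ge0; lra.
Qed.

Let b_le : b <= 3 / 4.
Proof.
have a0 : 0 < a by rewrite /a mulr_gt0.
rewrite -(ler_pM2l a0) ab /a.
by have := c_le; have := s_le; lra.
Qed.

Let x := cluster2 m.+1 (pt2 g a) (pt2 g (- b)).
Let p k := dot (gd x eta k) (pt2 g a).
Let q k := dot (gd x eta k) (pt2 g (- b)).

Let pS k : p k.+1 = p k + K * sigma (p k) - E * N1 * c * sigma (q k).
Proof.
rewrite /p dot_gd_cluster2S -/x -/(p k) -/(q k) -/E -/N1 !dot_pt2_pt2.
have -> : g * g + - b * a = - c by rewrite mulNr [b * a]mulrC ab expr2 opprD addNKr.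
have -> : g * g + a * a = s by rewrite /s !expr2.
rewrite /K; move: (p k) (sigma (p k)) (sigma (q k)) => P sp sq; ring.
Qed.

Let qS k : q k - E * c * sigma (p k) <= q k.+1.
Proof.
rewrite /q dot_gd_cluster2S -/x -/(p k) -/(q k) -/E -/N1 !dot_pt2_pt2.
have -> : g * g + a * - b = - c by rewrite mulrN ab expr2 opprD addNKr.
have : 0 <= E * (N1 * (sigma (q k) * (g * g + - b * - b))).
  have gb : 0 <= g * g + - b * - b by rewrite mulrNN -!expr2 addr_ge0 ?sqr_ge0.
  exact: mulr_ge0 (ltW E_gt0) (mulr_ge0 (le_trans ler01 N1_ge1) (mulr_ge0 (ltW (sigma_gt0 _)) gb)).
rewrite mulrDr; lra.
Qed.

Let p1 : p 1%N = L.
Proof.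
rewrite /p dot_gd_cluster2S /= !dot0l sigma0 -/E -/N1 !dot_pt2_pt2.
have -> : g * g + - b * a = - c by rewrite mulNr [b * a]mulrC ab expr2 opprD addNKr.
have -> : g * g + a * a = s by rewrite /s !expr2.
have -> : 2^-1 * s + N1 * (2^-1 * - c) = 2^-1 * (s - N1 * c) by ring.
by rewrite add0r N1c /E; field; rewrite -natrD pnatr_eq0 (lt0r_neq0 eta_gt0).
Qed.

Let q1 : E / 24 <= q 1%N.
Proof.
rewrite /q dot_gd_cluster2S /= !dot0l sigma0 -/E -/N1 !dot_pt2_pt2 add0r.
have -> : g * g + a * - b = - c by rewrite mulrN ab expr2 opprD addNKr.
have a_le : a <= 12^-1 by rewrite /a; have := g2_le; lra.
have : 12^-1 <= - c + N1 * (g * g + - b * - b).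
  have : 0 <= (N1 - 1) * (g * g + b * b).
    by rewrite mulr_ge0 ?subr_ge0 // addr_ge0 // -expr2 sqr_ge0.
  have := b_ge; have := ab; rewrite mulrNN -expr2; nra.
have := E_gt0; nra.
Qed.

Let T_gt0 : 0 < T. Proof. by rewrite invr_gt0 mulr_gt0. Qed.

Let sT : s * T <= 5 / 28.
Proof.
rewrite /T ler_pdivrMr ?mulr_gt0 //.
by have := s_le; have := g2_gt0; lra.
Qed.

Let expL_le : exp L + 27 * K * T <= 6 * E.
Proof.
have s1 : s <= 1 by have := s_le; have := g2_le; lra.
have expL : exp L <= E.
  rewrite /L lnK ?lt_max ?ltr01 // ge_max; apply/andP; split; first by have := E_ge; lra.
  by rewrite -[leRHS]mulr1 /K (ler_pM2l E_gt0).
have : K * T <= E * (5 / 28) by rewrite /K -mulrA (ler_pM2l E_gt0).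
by have := E_gt0; lra.
Qed.

Let T_cross : T * (E * N1 * c * (9 * (6 * E) ^+ 2 * exp (- q 1%N))) <= 1.
Proof.
set X := exp (- q 1%N).
have X0 : 0 < X by rewrite exp_gt0.
have E20 : 0 <= E ^+ 2 by rewrite sqr_ge0.
have NcT : E * (N1 * c * T) <= E * (5 / 28).
  apply: (ler_wpM2l (ltW E_gt0)); apply: le_trans sT.
  exact: (ler_wpM2r (ltW T_gt0) N1c_le).
have XE : X <= (exp (E / 24))^-1 by rewrite -expN ler_exp lerN2; exact: q1.
have cube := cube_le_exp E_ge.
apply: le_trans (_ : (E * (5 / 28)) * (324 * (E ^+ 2 * X)) <= _).
  rewrite (_ : T * _ = (E * (N1 * c * T)) * (324 * (E ^+ 2 * X))); last by rewrite exprMn; ring.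
  exact (ler_wpM2r (mulr_ge0 (ler0n _ 324) (mulr_ge0 E20 (ltW X0))) NcT).
apply: le_trans (_ : 58 * E ^+ 3 * (exp (E / 24))^-1 <= _).
  have -> : E * (5 / 28) * (324 * (E ^+ 2 * X)) = 405 / 7 * E ^+ 3 * X by rewrite exprS; field.
  have E30 : 0 <= E ^+ 3 := exprn_ge0 3 (ltW E_gt0).
  have c58 : 405 / 7 * E ^+ 3 <= 58 * E ^+ 3 by apply: ler_wpM2r => //; lra.
  exact (ler_pM (mulr_ge0 (divr_ge0 (ler0n _ 405) (ler0n _ 7)) E30) (ltW X0) c58 XE).
by rewrite ler_pdivrMr ?exp_gt0 // mul1r.
Qed.

Lemma hard_instance_narrow : hard_instance m.+2 g eta 3000^-1.
Proof.
have a0 : 0 < a by rewrite /a mulr_gt0.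
have b0 : 0 <= b by have := b_ge; lra.
have ab_le0 : a * - b <= 0 by rewrite mulrN oppr_le0; exact: mulr_ge0 (ltW a0) b0.
have norm0 : g ^+ 2 + a ^+ 2 <= 1 by have := s_le; have := g2_le; rewrite /s; lra.
have norm1 : g ^+ 2 + (- b) ^+ 2 <= 1.
  by rewrite sqrrN; have := b_le; have := g2_le; nra.
apply: (cluster2_hard_instance g_gt0 ab_le0 norm0 norm1).
move=> t; rewrite -/x => small.
have A_ge0 : 0 <= E * N1 * c.
  exact: mulr_ge0 (mulr_ge0 (ltW E_gt0) (le_trans ler01 N1_ge1)) c_ge0.
have B_le : E * c <= 2 * K.
  have c2 : c <= 2 * s by have := c_le; have := s_gt0; lra.
  by have := ler_wpM2l (ltW E_gt0) c2; rewrite /K; lra.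
have p_le k : k%:R <= T -> exp (p k.+1) <= exp L + 27 * K * k%:R.
  apply: (coupled_rec_exp_le (u := fun j => p j.+1) (v := fun j => q j.+1) K_ge0 L_ge0 K_le_expL
            A_ge0 B_le p1 erefl _ _ expL_le T_cross) => j.
  - by rewrite pS.
  - exact: qS.
have := exp_margin_ge_small_loss ord0 eta_gt0 small.
rewrite -/E /x /cluster2 eqxx -/x -/(p t) => p_large.
case: t small p_large => [|k] _ p_large.
  by move: p_large; rewrite /p dot0l exp0; have := E_ge; lra.
apply: tau_bound_le_narrow => //; rewrite -/T.
case: (lerP k%:R T) => [kT|/ltW Tk]; last by apply: le_trans Tk _; rewrite ler_nat.
have := p_le k kT; have := expL_le; have : 27 * K * k%:R <= 27 * K * T.
  exact (ler_wpM2l (mulr_ge0 (ler0n _ 27) K_ge0) kT).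
have := E_ge; lra.
Qed.

End Narrow.
End LogisticGradientDescent.

Theorem theorem10 :
  exists c : R, 0 < c /\
  forall (g : R) (n : nat) (eta : R),
    0 < g -> g <= 6^-1 -> (2 <= n)%N ->
    Num.max (n%:R) (32 / g ^+ 2 * ln (3 / g)) <= eta ->
    exists (d : nat) (x : 'I_n -> 'rV[R]_d),
      (forall i, vnorm (x i) <= 1) /\
      lin_separable x /\
      max_margin_is x g /\
      (* tau := min{t : F(w_t) <= 1/(8 eta)} >= c (n/g + 1/g^2) *)
      (forall t : nat, loss x (gd x eta t) <= (8 * eta)^-1 ->
         c * (n%:R / g + (g ^+ 2)^-1) <= t%:R).
Proof.
exists 3000^-1; split; first by rewrite invr_gt0.
move=> g n eta g_gt0 g_le n_ge2; rewrite ge_max => /andP[n_le_eta eta_ge].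
have eta_ge64 : 64 / g ^+ 2 <= eta.
  have ln_ge : 2 <= ln (3 / g).
    apply: ln_ge2; rewrite RdivE IZRposE INRE ler_pdivlMr // /=; lra.
  apply: le_trans eta_ge; have g2 : 0 < g ^+ 2 by rewrite exprn_gt0.
  rewrite (_ : 64 / g ^+ 2 = 32 / g ^+ 2 * 2); last by field; rewrite lt0r_neq0.
  by rewrite ler_wpM2l // divr_ge0 ?ltW.
case: n n_ge2 n_le_eta => [|[|m]] // _ n_le_eta.
case: (lerP 1 (100 * m.+2%:R * g)) => [wide|narrow].
  exact: (hard_instance_wide g_gt0 g_le n_le_eta wide).
exact: (hard_instance_narrow g_gt0 g_le n_le_eta eta_ge64 narrow).
Qed.
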